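(* Let $n=2$ and let $M$ be a Griffiths positive $2\times 2$ matrix of constant coefficient $(1,1)$-forms on $\mathbb{C}^2$. Then $\Omega=\det(M)$ is a Lefschetz form for the bidegree $(0,0)$, i.e. $c\mapsto c\,\Omega$ is an isomorphism $\mathbb{C}=V^{0,0}\to V^{2,2}$ (equivalently $\Omega\neq 0$).
   Context: $V^{p,q}$ is the space of constant coefficient $(p,q)$-forms on $\mathbb{C}^n$. A $(1,1)$-form is Kähler if it equals $\sum_l\frac{\sqrt{-1}}{2}dw_l\wedge d\overline{w_l}$ in some complex linear coordinates. A matrix $M=(\alpha_{i,j})$ of $(1,1)$-forms with $\alpha_{i,j}=\overline{\alpha_{j,i}}$ is Griffiths positive if $\sum_{i,j}\theta_i\alpha_{i,j}\overline{\theta_j}$ is Kähler for all nonzero $\theta$. $\det(M)=\alpha_{1,1}\wedge\alpha_{2,2}-\alpha_{1,2}\wedge\alpha_{2,1}$. *)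

(* Complex numbers are modelled as R[i] = complex R for an
   arbitrary real closed field R (R = the reals is the case of the paper). *)
From HB Require Import structures.
From mathcomp Require Import all_boot all_order all_algebra.
From mathcomp Require Import complex.
Set Implicit Arguments. Unset Strict Implicit. Unset Printing Implicit Defensive.
Import Order.TTheory GRing.Theory Num.Theory.
Local Open Scope ring_scope.

(* A constant coefficient (1,1)-form on C^2,
     alpha = sum_{k,l} a k l * (sqrt(-1)/2) dz_k /\ dz_l-bar,
   is represented by its coefficient matrix a : 'M[C]_2. *)
Definition form11 (C : Type) := 'M[C]_2.

(* Complex conjugate of a (1,1)-form:
   conj(a_kl (i/2) dz_k /\ dzbar_l) = conj(a_kl) (i/2) dz_l /\ dzbar_k. *)
Definition form_conj (C : numClosedFieldType) (a : form11 C) : form11 C :=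
  \matrix_(k < 2, l < 2) (a l k)^*.

(* The (1,1)-form sum_l (i/2) dw_l /\ dwbar_l, where w = P z
   (w_l = sum_k P l k z_k) are new complex linear coordinates:
   its coefficient in front of (i/2) dz_k /\ dzbar_m is sum_l P l k * conj (P l m). *)
Definition std_kahler_in (C : numClosedFieldType) (P : 'M[C]_2) : form11 C :=
  \matrix_(k < 2, m < 2) \sum_(l < 2) P l k * (P l m)^*.

Definition kahler (C : numClosedFieldType) (a : form11 C) : Prop :=
  exists P : 'M[C]_2, P \in unitmx /\ a = std_kahler_in P.

(* V^{2,2} on C^2 is one-dimensional; an element is represented by its
   coefficient with respect to ((i/2) dz_1/\dzbar_1) /\ ((i/2) dz_2/\dzbar_2).
   Wedge product V^{1,1} x V^{1,1} -> V^{2,2}, computed from the exterior algebra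
   (the terms dz_1 dzbar_2 dz_2 dzbar_1 and dz_2 dzbar_1 dz_1 dzbar_2 carry sign -1). *)
Definition wedge11 (C : numClosedFieldType) (a b : form11 C) : C :=
  a 0 0 * b 1 1 + a 1 1 * b 0 0 - a 0 1 * b 1 0 - a 1 0 * b 0 1.

Definition formmx (C : Type) := 'I_2 -> 'I_2 -> form11 C.

Definition hermitian_formmx (C : numClosedFieldType) (M : formmx C) : Prop :=
  forall i j, M i j = form_conj (M j i).

Definition formmx_eval (C : numClosedFieldType) (M : formmx C) (theta : 'I_2 -> C)
  : form11 C := \sum_(i < 2) \sum_(j < 2) (theta i * (theta j)^*) *: M i j.

Definition griffiths_positive (C : numClosedFieldType) (M : formmx C) : Prop :=
  hermitian_formmx M /\
  forall theta : 'I_2 -> C, (exists i, theta i != 0) -> kahler (formmx_eval M theta).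

Definition det_formmx (C : numClosedFieldType) (M : formmx C) : C :=
  wedge11 (M 0 0) (M 1 1) - wedge11 (M 0 1) (M 1 0).

Definition lefschetz00 (C : numClosedFieldType) (Omega : C) : Prop :=
  bijective (fun c : C => c * Omega).

(** Griffiths positivity is invariant under a complex linear change of
    coordinates, which multiplies [det(M)] by the positive factor
    [|det U|^2].  Choosing coordinates in which [alpha_11] is the standard
    Kahler form, write [alpha_12 = X] and [alpha_22 = B].  Testing positivity
    on [theta = (0, 1)] and on [theta = (1, -x_k / b_k)] gives [b_k > 0] and
    [|x_k|^2 < b_k] for the diagonal coefficients [x_k] of [X] and [b_k] of
    [B].  In these coordinates
      [det(M) = (b_1 - |x_1|^2) + (b_2 - |x_2|^2) + |x_1 - x_2|^2 + |X_12|^2 + |X_21|^2],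
    so [det(M) > 0]; in particular it is nonzero, i.e. Lefschetz. *)
From mathcomp Require Import all_boot all_order all_algebra.
From mathcomp Require Import complex.
From mathcomp Require Import ring.
Import Order.TTheory GRing.Theory Num.Theory.
Local Open Scope ring_scope.

Lemma big_ord2 (V : nmodType) (F : 'I_2 -> V) : \sum_(i < 2) F i = F 0 + F 1.
Proof.
rewrite big_ord_recl big_ord1.
by congr (_ + F _); apply/val_inj.
Qed.

Lemma det_mx2 (R : comPzRingType) (a : 'M[R]_2) :
  \det a = a 0 0 * a 1 1 - a 0 1 * a 1 0.
Proof.
rewrite (expand_det_row _ 0) big_ord2 /cofactor !det_mx11 !mxE /=.
have -> : lift 0 (0 : 'I_1) = 1 :> 'I_2 by apply/val_inj.
have -> : lift 1 (0 : 'I_1) = 0 :> 'I_2 by apply/val_inj.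
by rewrite expr0 expr1 !mul1r mulN1r mulrN.
Qed.

Section Pullback.
Context {C : numClosedFieldType}.

Definition conj_mx {m n} (a : 'M[C]_(m, n)) := map_mx (@Num.conj C) a.

Lemma conj_mxK m n (a : 'M[C]_(m, n)) : conj_mx (conj_mx a) = a.
Proof. by apply/matrixP => i j; rewrite !mxE conjCK. Qed.

Lemma conj_mxM m n p (a : 'M[C]_(m, n)) (b : 'M[C]_(n, p)) :
  conj_mx (a *m b) = conj_mx a *m conj_mx b.
Proof. exact: map_mxM. Qed.

Lemma conj_mx_tr m n (a : 'M[C]_(m, n)) : conj_mx a^T = (conj_mx a)^T.
Proof. by rewrite /conj_mx map_trmx. Qed.

(* Coefficient matrix of the pullback of the (1,1)-form with coefficient
   matrix [a] under the linear substitution [z = U w]. *)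
Definition pullback {n} (U a : 'M[C]_n) := U^T *m a *m conj_mx U.

Lemma pullbackD n (U a b : 'M[C]_n) :
  pullback U (a + b) = pullback U a + pullback U b.
Proof. by rewrite /pullback mulmxDr mulmxDl. Qed.

Lemma pullbackZ n (U a : 'M[C]_n) s : pullback U (s *: a) = s *: pullback U a.
Proof. by rewrite /pullback scalemxAl scalemxAr. Qed.

Lemma det_pullback n (U a : 'M[C]_n) :
  \det (pullback U a) = `|\det U| ^+ 2 * \det a.
Proof. by rewrite /pullback !det_mulmx det_tr det_map_mx normCK; ring. Qed.

Lemma std_kahler_inE (P : 'M[C]_2) : std_kahler_in P = P^T *m conj_mx P.
Proof. by apply/matrixP => k m; rewrite !mxE; apply: eq_bigr => l _; rewrite !mxE. Qed.

Lemma std_kahler_in1 : std_kahler_in (1%:M : 'M[C]_2) = 1%:M.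
Proof. by rewrite std_kahler_inE trmx1 /conj_mx map_mx1 mulmx1. Qed.

Lemma pullback_std_kahler (U P : 'M[C]_2) :
  pullback U (std_kahler_in P) = std_kahler_in (P *m U).
Proof. by rewrite /pullback !std_kahler_inE trmx_mul conj_mxM !mulmxA. Qed.

Lemma kahler_pullback (U a : 'M[C]_2) :
  U \in unitmx -> kahler a -> kahler (pullback U a).
Proof.
move=> U_unit [P [P_unit ->]]; exists (P *m U).
by rewrite unitmx_mul P_unit U_unit pullback_std_kahler.
Qed.

Lemma form_conjE (a : form11 C) : form_conj a = (conj_mx a)^T.
Proof. by apply/matrixP => i j; rewrite !mxE. Qed.

Lemma form_conj_pullback (U a : 'M[C]_2) :
  form_conj (pullback U a) = pullback U (form_conj a).
Proof.
rewrite !form_conjE /pullback !conj_mxM conj_mx_tr conj_mxK.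
by rewrite !trmx_mul trmxK -conj_mx_tr mulmxA.
Qed.

Lemma wedge11E (a b : form11 C) : wedge11 a b = \det (a + b) - \det a - \det b.
Proof. by rewrite !det_mx2 /wedge11 !mxE; ring. Qed.

Lemma wedge11_pullback (U a b : 'M[C]_2) :
  wedge11 (pullback U a) (pullback U b) = `|\det U| ^+ 2 * wedge11 a b.
Proof. by rewrite !wedge11E -pullbackD !det_pullback; ring. Qed.

Definition formmx_pullback (U : 'M[C]_2) (M : formmx C) : formmx C :=
  fun i j => pullback U (M i j).

Lemma det_formmx_pullback U (M : formmx C) :
  det_formmx (formmx_pullback U M) = `|\det U| ^+ 2 * det_formmx M.
Proof. by rewrite /det_formmx /formmx_pullback !wedge11_pullback; ring. Qed.

Lemma formmx_eval_pullback U (M : formmx C) theta :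
  formmx_eval (formmx_pullback U M) theta = pullback U (formmx_eval M theta).
Proof. by rewrite /formmx_eval !big_ord2 !pullbackD !pullbackZ. Qed.

Lemma griffiths_positive_pullback {U} {M : formmx C} :
  U \in unitmx -> griffiths_positive M -> griffiths_positive (formmx_pullback U M).
Proof.
move=> U_unit [M_herm M_pos]; split=> [i j | theta theta_neq0].
  by rewrite /formmx_pullback form_conj_pullback -M_herm.
by rewrite formmx_eval_pullback; apply/kahler_pullback/M_pos.
Qed.

End Pullback.

Section GriffithsPositive.
Context {C : numClosedFieldType}.
Implicit Types (a : form11 C) (M : formmx C).

Lemma kahler_diag_gt0 a : kahler a -> forall k, 0 < a k k.
Proof.
move=> [P [P_unit ->]] k; rewrite !mxE.
have [l Plk_neq0] : exists l, P l k != 0.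
  apply/existsP; apply: contraLR P_unit; rewrite negb_exists unitmxE unitfE negbK.
  move=> /forallP Pk0; rewrite (expand_det_col _ k) big1 // => i _.
  by move: (Pk0 i); rewrite negbK => /eqP ->; rewrite mul0r.
rewrite (bigD1 l) //= ltr_wpDr ?mul_conjC_gt0 //.
by rewrite sumr_ge0 // => i _; rewrite mul_conjC_ge0.
Qed.

Lemma formmx_eval2 M s t :
  formmx_eval M (fun i => if i == 0 then s else t) =
  (s * s^*) *: M 0 0 + (s * t^*) *: M 0 1 + (t * s^*) *: M 1 0 + (t * t^*) *: M 1 1.
Proof. by rewrite /formmx_eval !big_ord2 /= !addrA. Qed.

Lemma griffiths_positive_kahler {M} :
  griffiths_positive M -> forall s t, (s != 0) || (t != 0) ->
  kahler ((s * s^*) *: M 0 0 + (s * t^*) *: M 0 1 + (t * s^*) *: M 1 0 + (t * t^*) *: M 1 1).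
Proof.
move=> [_ M_pos] s t /orP st_neq0; rewrite -formmx_eval2; apply: M_pos.
by case: st_neq0; [exists 0 | exists 1].
Qed.

Lemma griffiths_positive_kahler00 {M} : griffiths_positive M -> kahler (M 0 0).
Proof.
move=> M_pos; have := griffiths_positive_kahler M_pos 1 0.
rewrite oner_neq0 conjC1 conjC0.
by rewrite !(mul0r, mulr0, scale0r, addr0) mulr1 scale1r; apply.
Qed.

Lemma griffiths_positive_kahler11 {M} : griffiths_positive M -> kahler (M 1 1).
Proof.
move=> M_pos; have := griffiths_positive_kahler M_pos 0 1.
rewrite oner_neq0 orbT conjC1 conjC0.
by rewrite !(mul0r, mulr0, scale0r, add0r) mulr1 scale1r; apply.
Qed.

Section Normalized.
Context {M : formmx C}.
Hypothesis M_pos : griffiths_positive M.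
Hypothesis M00 : M 0 0 = 1%:M.

Let X := M 0 1.
Let B := M 1 1.

Let M10 : M 1 0 = form_conj X.
Proof. by case: M_pos. Qed.

Lemma normalized_diag_bound k : X k k * (X k k)^* < B k k.
Proof.
set x := X k k; set b := B k k.
have b_gt0 : 0 < b by exact: kahler_diag_gt0 (griffiths_positive_kahler11 M_pos) k.
have b_real : b^* = b by rewrite geC0_conj // ltW.
(* theta = (1, t) minimizes the (k,k) coefficient of M(theta) *)
pose t := - x / b.
have t_conj : t^* = - x^* / b by rewrite /t rmorphM rmorphN fmorphV -[in RHS]b_real.
have := griffiths_positive_kahler M_pos 1 t; rewrite oner_neq0.
move=> /(_ isT) /kahler_diag_gt0 /(_ k).
rewrite !mxE M00 M10 !mxE eqxx /= -/x -/b conjC1 !mulr1 mul1r t_conj /t.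
have -> : 1 + - x^* / b * x + - x / b * x^* + - x / b * (- x^* / b) * b =
          (b - x * x^*) / b by field; rewrite gt_eqF.
by rewrite pmulr_lgt0 ?invr_gt0 // subr_gt0.
Qed.

Lemma normalized_det_formmxE :
  det_formmx M = (B 0 0 - X 0 0 * (X 0 0)^*) + (B 1 1 - X 1 1 * (X 1 1)^*)
    + ((X 0 0 - X 1 1) * (X 0 0 - X 1 1)^* + X 0 1 * (X 0 1)^* + X 1 0 * (X 1 0)^*).
Proof. by rewrite /det_formmx M00 M10 /wedge11 !mxE /= rmorphB; ring. Qed.

Lemma normalized_det_formmx_gt0 : 0 < det_formmx M.
Proof.
rewrite normalized_det_formmxE ltr_wpDr //.
  by rewrite !addr_ge0 // mul_conjC_ge0.
by rewrite addr_gt0 // subr_gt0 normalized_diag_bound.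
Qed.

End Normalized.

Lemma det_formmx_gt0 M : griffiths_positive M -> 0 < det_formmx M.
Proof.
move=> M_pos; have [P [P_unit M00]] := griffiths_positive_kahler00 M_pos.
have Pinv_unit : invmx P \in unitmx by rewrite unitmx_inv.
have M'_pos := griffiths_positive_pullback Pinv_unit M_pos.
have M'00 : formmx_pullback (invmx P) M 0 0 = 1%:M.
  by rewrite /formmx_pullback M00 pullback_std_kahler mulmxV // std_kahler_in1.
have := normalized_det_formmx_gt0 M'_pos M'00.
rewrite det_formmx_pullback pmulr_rgt0 // exprn_gt0 // normr_gt0.
by rewrite -unitfE -unitmxE.
Qed.

End GriffithsPositive.

Lemma neq0_lefschetz00 (C : numClosedFieldType) (Omega : C) :
  Omega != 0 -> lefschetz00 Omega.
Proof. by move=> Omega_neq0; exists (fun c => c / Omega) => c; [exact: mulfK | exact: divfK]. Qed.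

Theorem mainTheorem5 (R : rcfType) (M : formmx R[i]) :
  griffiths_positive M -> lefschetz00 (det_formmx M).
Proof. by move=> /det_formmx_gt0 /lt0r_neq0 /neq0_lefschetz00. Qed.
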